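(* Let $\mathcal A\subseteq E^\infty$, let $V\subseteq E$ be a block subspace, $\vec v$ a finite block sequence and $T$ a $(V,\vec v)$-rule, and suppose that for every block subspace $W\subseteq V$, player I has no strategy in $B^T_W(\vec v)$ to play in $\mathcal A$. Then there are a block subspace $X\subseteq V$ and an $(X,\vec v)$-rule $S\subseteq T$ such that $[S]\cap{\rm Int}(\mathcal A)=\emptyset$ and, for every block subspace $W\subseteq X$, player I has no strategy in $B^S_W(\vec v)$ to play in $\mathcal A$.
   Context: Fix a countable field $\mathfrak F$ and let $E$ be the countable-dimensional $\mathfrak F$-vector space with basis $(e_n)$. For non-zero $x=\sum a_ne_n$, ${\rm supp}\,x=\{n:a_n\neq0\}$. A block sequence is a sequence of non-zero vectors with $\max{\rm supp}\,x_n<\min{\rm supp}\,x_{n+1}$. ''Subspace'' means an infinite-dimensional block subspace of $E$. For a subspace $X$, $X[k]=\{x\in X\setminus\{0\}:k<\min{\rm supp}\,x\}$. $E^\infty=E^{\mathbb N}$ with the product of discrete topologies; ${\rm Int}$ denotes interior; $E^{<\infty}$ is the set of finite block sequences; $\hat{}$ is concatenation; $T_{\vec x}=\{\vec y:\vec x\,\hat{}\,\vec y\in T\}$; $[T]=\{(x_n)\in E^\infty:\text{for infinitely many } m,\ (x_0,\dots,x_m)\in T\}$. Game $B_V(\vec v)$: if $|\vec v|$ is even: II plays a subspace $Z_0\subseteq V$; I plays non-zero $x_0\in Z_0$ and $n_0\in\mathbb N$; II plays non-zero $y_0\in V[n_0]$ and a subspace $Z_1\subseteq V$; I plays $x_1\in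 Z_1$, $n_1$; II plays $y_1\in V[n_1]$, $Z_2$; etc.; outcome $\vec v\,\hat{}\,(x_0,y_0,x_1,y_1,\dots)$. If $|\vec v|$ is odd: I plays $n_0$; II plays $y_0\in V[n_0]$ and $Z_0\subseteq V$; I plays $x_0\in Z_0$ and $n_1$; II plays $y_1\in V[n_1]$ and $Z_1$; etc.; outcome $\vec v\,\hat{}\,(y_0,x_0,y_1,x_1,\dots)$. A $(V,\vec v)$-rule is a set $T\subseteq E^{<\infty}$ with $\vec v\in T$ such that: (i) if $\vec y\in T$, $|\vec y|$ odd, then for every subspace $Z\subseteq V$ there is $z\in Z$ with $\vec y\,\hat{}\,z\in T$; (ii) if $\vec y\in T$, $|\vec y|$ even, then there is $n$ with $\vec y\,\hat{}\,z\in T$ for all $z\in V[n]$. The $T$-induced subgame $B^T_V(\vec v)$ is played as $B_V(\vec v)$ with the additional requirement that every position, i.e. the finite sequence of vectors played so far listed in the order they appear in the outcome, belongs to $T_{\vec v}$. A strategy to play in $\mathcal A$ is one all of whose outcomes lie in $\mathcal A$. *)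

From HB Require Import structures.
From mathcomp Require Import all_boot all_order all_algebra.
Set Implicit Arguments. Unset Strict Implicit. Unset Printing Implicit Defensive.
Import Order.TTheory GRing.Theory Num.Theory.
Local Open Scope ring_scope.

(* The countable-dimensional F-vector space E with basis (e_n) is modelled
   as {poly F}: e_n = 'X^n, and the coordinate a_n of x is x`_n. *)
Section Defs.
Variable F : countFieldType.
Local Notation E := {poly F}.

Definition supp_before (x y : E) : Prop :=
  forall i j : nat, x`_i != 0 -> y`_j != 0 -> (i < j)%N.

Definition block_seq (z : nat -> E) : Prop :=
  forall n : nat, z n != 0 /\ supp_before (z n) (z n.+1).

Definition block_fin (s : seq E) : Prop :=
  (forall k : nat, (k < size s)%N -> nth 0 s k != 0) /\
  (forall k : nat, (k.+1 < size s)%N -> supp_before (nth 0 s k) (nth 0 s k.+1)).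

Definition block_subspace (X : E -> Prop) : Prop :=
  exists z : nat -> E, block_seq z /\
    forall x : E, X x <-> exists (n : nat) (c : nat -> F), x = \sum_(i < n) c i *: z i.

Definition subset_of (X Y : E -> Prop) : Prop := forall x, X x -> Y x.

Definition tail_of (X : E -> Prop) (k : nat) (x : E) : Prop :=
  X x /\ x != 0 /\ forall i : nat, x`_i != 0 -> (k < i)%N.

Definition is_rule (V : E -> Prop) (v : seq E) (T : seq E -> Prop) : Prop :=
  T v /\
  (forall y, T y -> block_fin y) /\
  (forall y, T y -> odd (size y) ->
     forall Z, block_subspace Z -> subset_of Z V -> exists z, Z z /\ T (rcons y z)) /\
  (forall y, T y -> ~~ odd (size y) ->
     exists n : nat, forall z, tail_of V n z -> T (rcons y z)).

Definition body (T : seq E -> Prop) (x : nat -> E) : Prop :=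
  forall k : nat, exists m : nat, (k <= m)%N /\ T (mkseq x m.+1).

(* interior of A in the product of discrete topologies *)
Definition interior (A : (nat -> E) -> Prop) (x : nat -> E) : Prop :=
  exists m : nat, forall y : nat -> E, (forall i, (i < m)%N -> y i = x i) -> A y.

Definition outcome (v : seq E) (u : nat -> E) : nat -> E :=
  fun j => if (j < size v)%N then nth 0 v j else u (j - size v)%N.

Definition interleave (a b : nat -> E) : nat -> E :=
  fun j => if odd j then b j./2 else a j./2.

(* ---- The game B^T_W(v), |v| even ----
   II plays Z_0; then I plays (x_i, n_i); II plays (y_i, Z_{i+1}); ...
   A strategy for I maps Z_0 and the list [(y_0,Z_1);...;(y_{i-1},Z_i)]
   of II's later moves to I's i-th move (x_i, n_i). *)
Definition stratI_even := (E -> Prop) -> seq (E * (E -> Prop)) -> E * nat.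

Definition wins_even (A : (nat -> E) -> Prop) (T : seq E -> Prop)
    (W : E -> Prop) (v : seq E) (sigma : stratI_even) : Prop :=
  forall (Z : nat -> (E -> Prop)) (y : nat -> E),
  let mv := fun i : nat => sigma (Z 0%N) [seq (y j, Z j.+1) | j <- iota 0 i] in
  let x := fun i => (mv i).1 in
  let n := fun i => (mv i).2 in
  let u := interleave x y in
  let legZ := fun i => block_subspace (Z i) /\ subset_of (Z i) W in
  let legY := fun i => tail_of W (n i) (y i) /\ T (v ++ mkseq u (i.*2.+2)) in
  let legX := fun i => Z i (x i) /\ x i != 0 /\ T (v ++ mkseq u (i.*2.+1)) in
  (* sigma only makes legal moves against legal play of II *)
  (forall k : nat, (forall i, (i <= k)%N -> legZ i) ->
                   (forall i, (i < k)%N -> legY i) -> legX k) /\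
  ((forall i, legZ i /\ legY i) -> A (outcome v u)).

(* ---- The game B^T_W(v), |v| odd ----
   I plays n_0; II plays (y_0, Z_0); I plays (x_0, n_1); II plays (y_1, Z_1);
   ...  A strategy for I is n_0 together with a map sending
   [(y_0,Z_0);...;(y_i,Z_i)] to (x_i, n_{i+1}). *)
Definition stratI_odd := (nat * (seq (E * (E -> Prop)) -> E * nat))%type.

Definition wins_odd (A : (nat -> E) -> Prop) (T : seq E -> Prop)
    (W : E -> Prop) (v : seq E) (sigma : stratI_odd) : Prop :=
  forall (Z : nat -> (E -> Prop)) (y : nat -> E),
  let mv := fun i : nat => sigma.2 [seq (y j, Z j) | j <- iota 0 i.+1] in
  let x := fun i => (mv i).1 in
  let n := fun i => match i with 0%N => sigma.1 | i'.+1 => (mv i').2 end in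
  let u := interleave y x in
  let legII := fun i => tail_of W (n i) (y i) /\ T (v ++ mkseq u (i.*2.+1)) /\
                        block_subspace (Z i) /\ subset_of (Z i) W in
  let legI := fun i => Z i (x i) /\ x i != 0 /\ T (v ++ mkseq u (i.*2.+2)) in
  (forall k : nat, (forall i, (i <= k)%N -> legII i) -> legI k) /\
  ((forall i, legII i) -> A (outcome v u)).

Definition I_has_strategy (A : (nat -> E) -> Prop) (T : seq E -> Prop)
    (W : E -> Prop) (v : seq E) : Prop :=
  if odd (size v) then exists sigma : stratI_odd, wins_odd A T W v sigma
  else exists sigma : stratI_even, wins_even A T W v sigma.

End Defs.

From HB Require Import structures.
From mathcomp Require Import all_boot all_order all_algebra.
From Stdlib Require Import ClassicalEpsilon FunctionalExtensionality.
Set Implicit Arguments. Unset Strict Implicit. Unset Printing Implicit Defensive.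
Import GRing.Theory.
Local Open Scope ring_scope.

(* Write Win_T(W, q) for "player I has a strategy in B^T_W(q) to play in A".
   The argument diagonalizes twice over the countably many positions q.

   1. Block subspaces (first part of the file): the tail Z[N] of a block
      subspace is a block subspace, and [diagonalize] produces, for countably
      many requirements each satisfiable by shrinking, a block subspace X
      almost contained (X[N] ⊆ Y) in a witness Y of every requirement.
   2. Games: strategies in B^T_W(q) survive shrinking W and passing from
      W[N] to W; one-move analysis at odd and even positions; legal play wins
      once all continuations lie in A; and strategies for a smaller rule S ⊆ T
      can be switched to T-strategies as soon as the play leaves S.
   3. First diagonalization: below some X0 ⊆ V, Win_T(W, q) does not depend
      on W.  Second: below some X ⊆ X0, from every even position lost by I,
      the moves of I in X beyond some N keep the position lost.
   4. The rule S of positions of T lost by I in the game on X0 is then an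
      (X, v)-rule; its branches avoid Int(A), since a position all of whose
      continuations lie in A is won by legal play; and a strategy for I in
      B^S_W(v) would switch to one in B^T_W(v), contradicting the hypothesis. *)

Section BlockSubspaces.
Variable F : countFieldType.
Local Notation E := {poly F}.

Definition beyond (N : nat) (x : E) : Prop := forall i : nat, x`_i != 0 -> (N < i)%N.

(* The vectors of [Z] supported strictly above [N], i.e. Z[N] together with 0. *)
Definition tail_space (Z : E -> Prop) (N : nat) (x : E) : Prop := Z x /\ beyond N x.

Definition almost_subset (X Y : E -> Prop) : Prop :=
  exists N : nat, forall x, X x -> beyond N x -> Y x.

Definition span (z : nat -> E) (x : E) : Prop :=
  exists (n : nat) (c : nat -> F), x = \sum_(i < n) c i *: z i.

Lemma coef_neq0_lt_size (x : E) i : x`_i != 0 -> (i < size x)%N.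
Proof. by apply: contraR; rewrite -leqNgt => /(nth_default 0) ->. Qed.

Lemma top_coef_neq0 (x : E) : x != 0 -> x`_(size x).-1 != 0.
Proof. by rewrite -lead_coefE lead_coef_eq0. Qed.

Lemma beyond_lt_size N (x : E) : x != 0 -> beyond N x -> (N < size x)%N.
Proof.
move=> nz_x /(_ _ (top_coef_neq0 nz_x)); move/leq_trans; apply; exact: leq_pred.
Qed.

Definition beyondb (N : nat) (x : E) : bool := all (fun i => x`_i == 0) (iota 0 N.+1).

Lemma beyondP N (x : E) : beyond N x <-> beyondb N x.
Proof.
split=> [x_beyond | /allP x_zero i x_i].
- apply/allP => i; rewrite mem_iota add0n /= ltnS => le_iN.
  by apply: contraT => /x_beyond; rewrite ltnNge le_iN.
- rewrite ltnNge; apply/negP => le_iN.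
  by move: (x_zero i); rewrite mem_iota add0n /= ltnS le_iN (negbTE x_i) => /(_ isT).
Qed.

Section BlockSequence.
Variable z : nat -> E.
Hypothesis z_block : block_seq z.

Lemma block_seq_before i k : (i < k)%N -> supp_before (z i) (z k).
Proof.
elim: k => // k IH; rewrite ltnS leq_eqVlt => /orP [/eqP ->|lt_ik]; first by case: (z_block k).
move=> a b z_ia z_kb; have [nz_k before_k] := z_block k.
have top_k := top_coef_neq0 nz_k.
exact: ltn_trans (IH lt_ik _ _ z_ia top_k) (before_k _ _ top_k z_kb).
Qed.

Lemma block_seq_supp_ge i j : (z i)`_j != 0 -> (i <= j)%N.
Proof.
elim: i j => // i IH j z_ij; have [nz_i before_i] := z_block i.
have top_i := top_coef_neq0 nz_i.
exact: leq_ltn_trans (IH _ top_i) (before_i _ _ top_i z_ij).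
Qed.

Lemma block_seq_beyond_up N i k : (i <= k)%N -> beyond N (z i) -> beyond N (z k).
Proof.
elim: k => [|k IH]; first by rewrite leqn0 => /eqP ->.
rewrite leq_eqVlt => /orP [/eqP ->//|lt_ik] /(IH lt_ik) z_k_beyond j z_kj.
have [nz_k before_k] := z_block k; have top_k := top_coef_neq0 nz_k.
exact: ltn_trans (z_k_beyond _ top_k) (before_k _ _ top_k z_kj).
Qed.

Lemma coef_lincomb (c : nat -> F) n k j :
  (k < n)%N -> (z k)`_j != 0 -> (\sum_(i < n) c i *: z i)`_j = c k * (z k)`_j.
Proof.
move=> lt_kn z_kj; rewrite coef_sum (bigD1 (Ordinal lt_kn)) //= coefZ big1 ?addr0 // => i ne_ik.
rewrite coefZ; have [->|z_ij] := eqVneq (z i)`_j 0; first by rewrite mulr0.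
exfalso; have {}ne_ik : (i : nat) != k by apply: contra ne_ik => /eqP ?; apply/eqP/val_inj.
case: (ltngtP i k) => [lt_ik|lt_ki|eq_ik]; last by rewrite eq_ik eqxx in ne_ik.
- by have := block_seq_before lt_ik z_ij z_kj; rewrite ltnn.
- by have := block_seq_before lt_ki z_kj z_ij; rewrite ltnn.
Qed.

Lemma lincomb_beyond_coef0 (c : nat -> F) n k j N :
  (k < n)%N -> (z k)`_j != 0 -> (j <= N)%N ->
  beyond N (\sum_(i < n) c i *: z i) -> c k = 0.
Proof.
move=> lt_kn z_kj le_jN comb_beyond; apply/eqP; apply: contraT => c_k.
have := comb_beyond j; rewrite (coef_lincomb c lt_kn z_kj) mulf_neq0 // ltnNge le_jN.
by move/(_ isT).
Qed.

End BlockSequence.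

Lemma sum_widen (z : nat -> E) (c : nat -> F) n N : (n <= N)%N ->
  \sum_(i < n) c i *: z i = \sum_(i < N) (if (i < n)%N then c i else 0) *: z i.
Proof.
move=> le_nN; rewrite (big_ord_widen N (fun i => c i *: z i) le_nN) big_mkcond /=.
by apply: eq_bigr => i _; case: ifP => //; rewrite scale0r.
Qed.

Lemma sum_split (w : nat -> E) m n :
  \sum_(i < m + n) w i = \sum_(i < m) w i + \sum_(i < n) w (m + i)%N.
Proof.
elim: n => [|n IH]; first by rewrite addn0 big_ord0 addr0.
by rewrite addnS !big_ord_recr /= IH addrA.
Qed.

Lemma span0 (z : nat -> E) : span z 0.
Proof. by exists 0%N, (fun _ => 0); rewrite big_ord0. Qed.

Lemma spanD (z : nat -> E) a b : span z a -> span z b -> span z (a + b).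
Proof.
move=> [n [c ->]] [m [d ->]].
exists (n + m)%N, (fun i => (if (i < n)%N then c i else 0) + (if (i < m)%N then d i else 0)).
rewrite (sum_widen _ _ (leq_addr m n)) (sum_widen _ _ (leq_addl n m)) -big_split /=.
by apply: eq_bigr => i _; rewrite scalerDl.
Qed.

Lemma spanZ (z : nat -> E) a (k : F) : span z a -> span z (k *: a).
Proof.
move=> [n [c ->]]; exists n, (fun i => k * c i).
by rewrite scaler_sumr; apply: eq_bigr => i _; rewrite scalerA.
Qed.

Lemma span_term (z : nat -> E) i : span z (z i).
Proof.
exists i.+1, (fun j => if j == i then 1 else 0).
rewrite big_ord_recr /= eqxx scale1r big1 ?add0r // => j _.
by rewrite (ltn_eqF (ltn_ord j)) scale0r.
Qed.

Lemma span_lincomb (z w : nat -> E) (c : nat -> F) n :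
  (forall i, (i < n)%N -> c i = 0 \/ span z (w i)) -> span z (\sum_(i < n) c i *: w i).
Proof.
elim: n => [|n IH] w_span; first by rewrite big_ord0; apply: span0.
rewrite big_ord_recr /=; apply: spanD.
  by apply: IH => i lt_in; apply: w_span; apply: ltnW.
case: (w_span n (ltnSn n)) => [->|]; [rewrite scale0r; exact: span0 | exact: spanZ].
Qed.

Lemma block_subspace_lincomb (Y : E -> Prop) (w : nat -> E) (c : nat -> F) n :
  block_subspace Y -> (forall i, (i < n)%N -> c i = 0 \/ Y (w i)) ->
  Y (\sum_(i < n) c i *: w i).
Proof.
move=> [z [_ Y_span]] w_Y; apply/Y_span; apply: span_lincomb => i lt_in.
by case: (w_Y i lt_in) => [->|/Y_span]; [left | right].
Qed.

Lemma span_sub_block_subspace (Y : E -> Prop) (w : nat -> E) x :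
  block_subspace Y -> (forall i, Y (w i)) -> span w x -> Y x.
Proof.
move=> Y_block w_Y [n [c ->]].
by apply: (block_subspace_lincomb Y_block) => i _; right.
Qed.

Lemma block_subspace_beyond (Y : E -> Prop) M :
  block_subspace Y -> exists x, Y x /\ x != 0 /\ beyond M x.
Proof.
move=> [z [z_block Y_span]]; exists (z M.+1); split; first exact/Y_span/span_term.
by split; [case: (z_block M.+1) | move=> i /(block_seq_supp_ge z_block)].
Qed.

(* Z[N] ∪ {0} is again a block subspace: it is spanned by the final segment
   of the block basis of [Z] consisting of the vectors supported above [N]. *)
Lemma tail_space_block (Z : E -> Prop) N :
  block_subspace Z -> block_subspace (tail_space Z N).
Proof.
move=> [z [z_block Z_span]].
have ex_beyond : exists i, beyondb N (z i).
  by exists N.+1; apply/beyondP => i /(block_seq_supp_ge z_block).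
case: (ex_minnP ex_beyond) => i0 /beyondP z_i0 i0_min.
exists (fun i => z (i0 + i)%N); split.
  by move=> i; case: (z_block (i0 + i)%N); rewrite addnS.
move=> x; split.
- move=> [/Z_span [n [c x_def]] x_beyond].
  have c_low : forall i, (i < i0)%N -> (i < n)%N -> c i = 0.
    move=> i lt_i0 lt_in; have : ~~ beyondb N (z i).
      by apply: contraT; rewrite negbK => /i0_min; rewrite leqNgt lt_i0.
    case/allPn => j; rewrite mem_iota add0n /= ltnS => le_jN z_ij.
    by apply: (lincomb_beyond_coef0 z_block lt_in z_ij le_jN); rewrite -x_def.
  exists n, (fun i => if (i0 + i < n)%N then c (i0 + i)%N else 0).
  rewrite x_def (sum_widen _ _ (leq_addl i0 n)).
  rewrite (sum_split (fun i => (if (i < n)%N then c i else 0) *: z i)) big1 ?add0r //.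
  move=> i _; case: ifP => lt_in; last by rewrite scale0r.
  by rewrite (c_low _ (ltn_ord i) lt_in) scale0r.
- move=> [n [c ->]]; split.
    apply/Z_span; apply: (span_lincomb (w := fun i => z (i0 + i)%N)) => i _.
    by right; apply: span_term.
  move=> j; rewrite coef_sum => sum_j.
  have [i _] : exists2 i : 'I_n, true & (c i *: z (i0 + i)%N)`_j != 0.
    apply/exists_inP; apply: contraR sum_j => /exists_inPn c_zero.
    by rewrite big1 // => i _; apply/eqP; move: (c_zero i isT); rewrite negbK.
  rewrite coefZ mulf_eq0 negb_or => /andP [_].
  exact: (block_seq_beyond_up z_block (leq_addr i i0) z_i0).
Qed.

Lemma tail_space_sub (Z : E -> Prop) N : subset_of (tail_space Z N) Z.
Proof. by move=> x []. Qed.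

Definition pick_beyond (Y : E -> Prop) (M : nat) : E :=
  epsilon (inhabits 0) (fun x => Y x /\ x != 0 /\ beyond M x).

Lemma pick_beyondP (Y : E -> Prop) M : block_subspace Y ->
  Y (pick_beyond Y M) /\ pick_beyond Y M != 0 /\ beyond M (pick_beyond Y M).
Proof.
move=> Y_block; apply: (epsilon_spec (inhabits 0) (fun x => Y x /\ x != 0 /\ beyond M x)).
exact: block_subspace_beyond.
Qed.

Lemma diagonal_block_subspace (Ys : nat -> E -> Prop) :
  (forall k, block_subspace (Ys k)) -> (forall k, subset_of (Ys k.+1) (Ys k)) ->
  exists X, block_subspace X /\ subset_of X (Ys 0%N) /\ forall k, almost_subset X (Ys k).
Proof.
move=> Ys_block Ys_decr.
have Ys_nested : forall i k, (i <= k)%N -> subset_of (Ys k) (Ys i).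
  move=> i k; apply: (homo_leq (f := Ys) (r := fun Y Y' => subset_of Y' Y)) => //.
  - by move=> Y x.
  - by move=> Y1 Y2 Y3 sub21 sub32 x /sub32 /sub21.
pose bnd := fix bnd k := if k is k'.+1 then size (pick_beyond (Ys k') (bnd k')) else 0%N.
pose xs k := pick_beyond (Ys k) (bnd k).
have xsP : forall k, Ys k (xs k) /\ xs k != 0 /\ beyond (bnd k) (xs k).
  by move=> k; apply: (pick_beyondP (bnd k) (Ys_block k)).
have bnd_mono : forall i k, (i <= k)%N -> (bnd i <= bnd k)%N.
  apply: (homo_leq (f := bnd) (r := fun a b => (a <= b)%N)) => [//|? ? ?|k].
    exact: leq_trans.
  by have [_ [nz_k beyond_k]] := xsP k; apply: ltnW; apply: beyond_lt_size.
have xs_block : block_seq xs.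
  move=> k; split; first by have [_ []] := xsP k.
  move=> a b xs_ka xs_k1b; apply: leq_trans (coef_neq0_lt_size xs_ka) _.
  by have [_ [_ beyond_k1]] := xsP k.+1; apply: ltnW (beyond_k1 _ xs_k1b).
exists (span xs); split; first by exists xs.
split=> [x|k].
  move=> x_span; apply: (span_sub_block_subspace (Ys_block 0%N) _ x_span) => i.
  by apply: (Ys_nested 0%N i) => //; case: (xsP i).
exists (bnd k) => x [n [c ->]] x_beyond.
apply: (block_subspace_lincomb (w := xs) (Ys_block k)) => i lt_in.
case: (ltnP i k) => [lt_ik|le_ki]; last by right; apply: Ys_nested le_ki _ _; case: (xsP i).
left; have [_ [nz_i _]] := xsP i.
apply: (lincomb_beyond_coef0 xs_block lt_in (top_coef_neq0 nz_i)) x_beyond.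
exact: leq_trans (leq_pred _) (bnd_mono _ _ lt_ik).
Qed.

Lemma requirement_chain (V : E -> Prop) (P : nat -> (E -> Prop) -> Prop) :
  block_subspace V ->
  (forall k Y, block_subspace Y -> subset_of Y V ->
     exists Y', block_subspace Y' /\ subset_of Y' Y /\ P k Y') ->
  exists Ys : nat -> E -> Prop, Ys 0%N = V /\ (forall k, block_subspace (Ys k)) /\
    (forall k, subset_of (Ys k.+1) (Ys k)) /\ (forall k, P k (Ys k.+1)).
Proof.
move=> V_block shrink.
pose good Y := block_subspace Y /\ subset_of Y V.
pose spec k Y Y' := good Y -> good Y' /\ subset_of Y' Y /\ P k Y'.
pose step k Y := epsilon (inhabits V) (spec k Y).
have stepP : forall k Y, spec k Y (step k Y).
  move=> k Y; apply: epsilon_spec.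
  case: (classic (good Y)) => [[Y_block YV]|not_good]; last by exists Y.
  have [Y' [Y'_block [Y'Y P_Y']]] := shrink k Y Y_block YV.
  by exists Y' => _; split=> //; split=> // x /Y'Y /YV.
pose Ys := fix Ys k := if k is k'.+1 then step k' (Ys k') else V.
have Ys_good : forall k, good (Ys k) by elim=> [|k IH]; [by split | exact: (stepP k _ IH).1].
exists Ys; split=> //; split=> [k|]; first exact: (Ys_good k).1.
by split=> k; have [_ []] := stepP k _ (Ys_good k).
Qed.

Lemma diagonalize (I : countType) (V : E -> Prop) (P : I -> (E -> Prop) -> Prop) :
  block_subspace V ->
  (forall i Y, block_subspace Y -> subset_of Y V ->
     exists Y', block_subspace Y' /\ subset_of Y' Y /\ P i Y') ->
  exists X, block_subspace X /\ subset_of X V /\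
    forall i, exists Y, P i Y /\ almost_subset X Y.
Proof.
move=> V_block shrink.
pose Pn k Y := forall i, unpickle k = Some i -> P i Y.
have [Ys [Ys0 [Ys_block [Ys_decr Ys_P]]]] : exists Ys : nat -> E -> Prop, Ys 0%N = V /\
    (forall k, block_subspace (Ys k)) /\ (forall k, subset_of (Ys k.+1) (Ys k)) /\
    (forall k, Pn k (Ys k.+1)).
  apply: requirement_chain => // k Y Y_block YV; rewrite /Pn.
  case: (unpickle k) => [i|]; last by exists Y; do 2!split=> //.
  have [Y' [Y'_block [Y'Y P_Y']]] := shrink i Y Y_block YV.
  by exists Y'; do 2!split=> //; move=> _ [<-].
have [X [X_block [XV X_almost]]] := diagonal_block_subspace Ys_block Ys_decr.
exists X; split=> //; split; first by rewrite -Ys0.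
by move=> i; exists (Ys (pickle i).+1); split; [apply: Ys_P; rewrite pickleK | apply: X_almost].
Qed.

End BlockSubspaces.

Section Sequences.
Variable F : countFieldType.
Local Notation E := {poly F}.

Lemma mkseq_add {T : Type} (f : nat -> T) m n :
  mkseq f (m + n) = mkseq f m ++ mkseq (fun i => f (m + i)%N) n.
Proof.
rewrite /mkseq iotaD map_cat; congr (_ ++ _).
by rewrite add0n -{1}[m]addn0 iotaDl -map_comp.
Qed.

Lemma eq_in_mkseq {T : Type} (f g : nat -> T) k :
  (forall i, (i < k)%N -> f i = g i) -> mkseq f k = mkseq g k.
Proof. by move=> fg; apply/eq_in_map => i; rewrite mem_iota add0n /=; apply: fg. Qed.

Lemma map_iotaS {T : Type} (f : nat -> T) i :
  [seq f j | j <- iota 0 i.+1] = f 0%N :: [seq f j.+1 | j <- iota 0 i].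
Proof. by rewrite /= -[1%N]addn0 iotaDl -map_comp. Qed.

Lemma position_split (p : seq E) (u : nat -> E) s t :
  p ++ mkseq u (s + t) = (p ++ mkseq u s) ++ mkseq (fun i => u (s + i)%N) t.
Proof. by rewrite mkseq_add catA. Qed.

Lemma outcome_split (p : seq E) (u : nat -> E) s :
  outcome p u = outcome (p ++ mkseq u s) (fun i => u (s + i)%N).
Proof.
apply: functional_extensionality => j; rewrite /outcome size_cat size_mkseq.
case: (ltnP j (size p)) => lt_jp; first by rewrite (ltn_addr _ lt_jp) nth_cat lt_jp.
case: ifP => [lt_j_ps|/negbT]; first by rewrite nth_cat ltnNge lt_jp /= nth_mkseq // ltn_subLR.
by rewrite -leqNgt => le_ps_j; congr u; rewrite subnDA addnC subnK // leq_subRL.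
Qed.

Lemma interleave_even (x y : nat -> E) i : interleave x y i.*2 = x i.
Proof. by rewrite /interleave odd_double doubleK. Qed.

Lemma interleave_odd (x y : nat -> E) i : interleave x y i.*2.+1 = y i.
Proof. by rewrite /interleave /= odd_double /= uphalf_double. Qed.

Lemma interleaveS (a b : nat -> E) t :
  interleave a b t.+1 = interleave b (fun i => a i.+1) t.
Proof. by rewrite /interleave /= uphalf_half; case: (odd t). Qed.

Lemma interleave_shift (a b : nat -> E) m t :
  interleave a b (m.*2 + t) = interleave (fun i => a (m + i)%N) (fun i => b (m + i)%N) t.
Proof. by rewrite /interleave oddD odd_double /= halfD odd_double /= doubleK; case: ifP. Qed.

Lemma interleave_agree (x x1 y y1 : nat -> E) K t :
  (forall i, (i < K)%N -> x i = x1 i /\ y i = y1 i) -> (t <= K.*2)%N ->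
  mkseq (interleave x y) t = mkseq (interleave x1 y1) t.
Proof.
move=> agree le_tK; apply: eq_in_mkseq => s lt_st.
have lt_sK : (s./2 < K)%N.
  rewrite -ltn_double; apply: leq_trans le_tK; apply: leq_ltn_trans lt_st.
  by rewrite -{2}(odd_double_half s) leq_addl.
by rewrite /interleave; case: ifP => _; [exact: (agree _ lt_sK).2 | exact: (agree _ lt_sK).1].
Qed.

Lemma positionS (p : seq E) (a b : nat -> E) j :
  p ++ mkseq (interleave a b) j.+1 = rcons p (a 0%N) ++ mkseq (interleave b (fun i => a i.+1)) j.
Proof.
rewrite -add1n position_split /= cats1; congr (_ ++ _).
by apply: eq_mkseq => i; apply: interleaveS.
Qed.

Lemma outcomeS (p : seq E) (a b : nat -> E) :
  outcome p (interleave a b) = outcome (rcons p (a 0%N)) (interleave b (fun i => a i.+1)).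
Proof.
rewrite (outcome_split p _ 1) /= cats1; congr outcome.
by apply: functional_extensionality => i; apply: interleaveS.
Qed.

Lemma position_shift (p : seq E) (x y : nat -> E) m t :
  p ++ mkseq (interleave x y) (m.*2 + t) =
  (p ++ mkseq (interleave x y) m.*2) ++
    mkseq (interleave (fun i => x (m + i)%N) (fun i => y (m + i)%N)) t.
Proof. by rewrite position_split; congr (_ ++ _); apply: eq_mkseq => i; apply: interleave_shift. Qed.

Lemma outcome_shift (p : seq E) (x y : nat -> E) m :
  outcome p (interleave x y) =
  outcome (p ++ mkseq (interleave x y) m.*2)
          (interleave (fun i => x (m + i)%N) (fun i => y (m + i)%N)).
Proof.
rewrite (outcome_split _ _ m.*2); congr outcome.
by apply: functional_extensionality => i; apply: interleave_shift.
Qed.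

Lemma position_round (p : seq E) (x y : nat -> E) i :
  p ++ mkseq (interleave x y) i.*2.+2 = (p ++ mkseq (interleave x y) i.*2) ++ [:: x i; y i].
Proof. by rewrite !mkseqS -!cats1 !catA interleave_even interleave_odd -catA. Qed.

Lemma position_half_round (p : seq E) (x y : nat -> E) i :
  p ++ mkseq (interleave x y) i.*2.+1 = rcons (p ++ mkseq (interleave x y) i.*2) (x i).
Proof. by rewrite mkseqS rcons_cat interleave_even. Qed.

Lemma odd_size_position (p : seq E) (u : nat -> E) i :
  odd (size (p ++ mkseq u i.*2)) = odd (size p).
Proof. by rewrite size_cat size_mkseq oddD odd_double addbF. Qed.

End Sequences.

Section Plays.
Variable F : countFieldType.
Local Notation E := {poly F}.
Variable A : (nat -> E) -> Prop.

Definition legal_subspace (W : E -> Prop) (Z : nat -> E -> Prop) (i : nat) : Prop :=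
  block_subspace (Z i) /\ subset_of (Z i) W.

Definition even_play_ok (T : seq E -> Prop) (W : E -> Prop) (p : seq E)
    (x : nat -> E) (n : nat -> nat) (Z : nat -> E -> Prop) (y : nat -> E) : Prop :=
  (forall k, (forall i, (i <= k)%N -> legal_subspace W Z i) ->
     (forall i, (i < k)%N ->
        tail_of W (n i) (y i) /\ T (p ++ mkseq (interleave x y) i.*2.+2)) ->
     Z k (x k) /\ x k != 0 /\ T (p ++ mkseq (interleave x y) k.*2.+1)) /\
  ((forall i, legal_subspace W Z i /\
      (tail_of W (n i) (y i) /\ T (p ++ mkseq (interleave x y) i.*2.+2))) ->
     A (outcome p (interleave x y))).

Definition odd_play_ok (T : seq E -> Prop) (W : E -> Prop) (p : seq E)
    (x : nat -> E) (n : nat -> nat) (Z : nat -> E -> Prop) (y : nat -> E) : Prop :=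
  (forall k, (forall i, (i <= k)%N -> tail_of W (n i) (y i) /\
        T (p ++ mkseq (interleave y x) i.*2.+1) /\ legal_subspace W Z i) ->
     Z k (x k) /\ x k != 0 /\ T (p ++ mkseq (interleave y x) k.*2.+2)) /\
  ((forall i, tail_of W (n i) (y i) /\
      T (p ++ mkseq (interleave y x) i.*2.+1) /\ legal_subspace W Z i) ->
     A (outcome p (interleave y x))).

Definition even_history (Z : nat -> E -> Prop) (y : nat -> E) (i : nat)
    : seq (E * (E -> Prop)) :=
  [seq (y j, Z j.+1) | j <- iota 0 i].

Definition even_move (s : stratI_even F) (Z : nat -> E -> Prop) (y : nat -> E) (i : nat)
    : E * nat :=
  s (Z 0%N) (even_history Z y i).

Definition odd_move (s : stratI_odd F) (Z : nat -> E -> Prop) (y : nat -> E) (i : nat)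
    : E * nat :=
  s.2 [seq (y j, Z j) | j <- iota 0 i.+1].

Definition odd_bound (s : stratI_odd F) (Z : nat -> E -> Prop) (y : nat -> E) (i : nat)
    : nat :=
  if i is i'.+1 then (odd_move s Z y i').2 else s.1.

Lemma wins_evenE T W p (s : stratI_even F) :
  wins_even A T W p s <-> forall Z y,
    even_play_ok T W p (fun i => (even_move s Z y i).1) (fun i => (even_move s Z y i).2) Z y.
Proof. by []. Qed.

Lemma wins_oddE T W p (s : stratI_odd F) :
  wins_odd A T W p s <-> forall Z y,
    odd_play_ok T W p (fun i => (odd_move s Z y i).1) (odd_bound s Z y) Z y.
Proof. by []. Qed.

Lemma even_play_ok_illegal T W p x n Z y : ~ legal_subspace W Z 0 -> even_play_ok T W p x n Z y.
Proof.
move=> illegal; split=> [k Z_legal|all_legal]; first by case: illegal; apply: Z_legal.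
by case: illegal; case: (all_legal 0%N).
Qed.

Lemma odd_play_ok_illegal T W p x n Z y :
  ~ (tail_of W (n 0%N) (y 0%N) /\ T (rcons p (y 0%N)) /\ legal_subspace W Z 0) ->
  odd_play_ok T W p x n Z y.
Proof.
move=> illegal; split=> [k legal|all_legal].
  by case: illegal; move: (legal 0%N isT); rewrite /= cats1.
by case: illegal; move: (all_legal 0%N); rewrite /= cats1.
Qed.

Lemma odd_play_okE T W p x n Z y :
  tail_of W (n 0%N) (y 0%N) /\ T (rcons p (y 0%N)) /\ legal_subspace W Z 0 ->
  (odd_play_ok T W p x n Z y <->
   even_play_ok T W (rcons p (y 0%N)) x (fun i => n i.+1) Z (fun i => y i.+1)).
Proof.
move=> legal0; split=> [[I_legal I_wins]|[I_legal I_wins]]; split.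
- move=> k Z_legal y_legal; rewrite -positionS -doubleS; apply: I_legal => -[_|i lt_ik].
    by move: legal0; rewrite /= cats1.
  have [y_i T_i] := y_legal i lt_ik; rewrite doubleS positionS.
  by split=> //; split=> //; apply: Z_legal.
- move=> all_legal; rewrite -outcomeS; apply: I_wins => -[|i].
    by move: legal0; rewrite /= cats1.
  have [Z_i [y_i T_i]] := all_legal i; rewrite doubleS positionS.
  by split=> //; split=> //; case: (all_legal i.+1).
- move=> k legal; rewrite -doubleS positionS; apply: I_legal => i lt_ik.
    by case: (legal i lt_ik) => _ [].
  by have [y_i [T_i _]] := legal i.+1 lt_ik; split=> //; rewrite -positionS -doubleS.
- move=> all_legal; rewrite outcomeS; apply: I_wins => i; split; first by case: (all_legal i) => _ [].
  by have [y_i [T_i _]] := all_legal i.+1; split=> //; rewrite -positionS -doubleS.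
Qed.

Lemma even_play_ok_first T W p x n Z y :
  (legal_subspace W Z 0 -> Z 0%N (x 0%N) /\ x 0%N != 0 /\ T (rcons p (x 0%N))) ->
  (legal_subspace W Z 0 ->
     odd_play_ok T W (rcons p (x 0%N)) (fun i => x i.+1) n (fun i => Z i.+1) y) ->
  even_play_ok T W p x n Z y.
Proof.
move=> first_legal rest_ok; split.
- move=> [|k] Z_legal y_legal; first by move: (first_legal (Z_legal 0%N isT)); rewrite /= cats1.
  have [I_legal _] := rest_ok (Z_legal 0%N isT).
  rewrite doubleS positionS; apply: I_legal => i lt_ik.
  have [y_i T_i] := y_legal i lt_ik; split=> //; split; first by rewrite -positionS.
  exact: Z_legal.
- move=> all_legal; rewrite outcomeS; apply: (rest_ok (all_legal 0%N).1).2 => i.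
  have [_ [y_i T_i]] := all_legal i; split=> //; split; first by rewrite -positionS.
  exact: (all_legal i.+1).1.
Qed.

End Plays.

Section Strategies.
Variable F : countFieldType.
Local Notation E := {poly F}.
Variable A : (nat -> E) -> Prop.

Lemma tail_of_sub (W W' : E -> Prop) n z : subset_of W' W -> tail_of W' n z -> tail_of W n z.
Proof. by move=> W'W [z_W' z_tail]; split=> //; apply: W'W. Qed.

Lemma legal_subspace_sub (W W' : E -> Prop) Z i :
  subset_of W' W -> legal_subspace W' Z i -> legal_subspace W Z i.
Proof. by move=> W'W [Z_block ZW']; split=> // x /ZW' /W'W. Qed.

(* Shrinking the ambient space only restricts II, so plays stay good for I. *)
Lemma even_play_ok_sub T (W W' : E -> Prop) p x n Z y :
  subset_of W' W -> even_play_ok A T W p x n Z y -> even_play_ok A T W' p x n Z y.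
Proof.
move=> W'W [I_legal I_wins]; split.
  move=> k Z_legal y_legal; apply: I_legal => i lt_ik.
    exact: legal_subspace_sub (Z_legal i lt_ik).
  by have [y_i T_i] := y_legal i lt_ik; split=> //; apply: tail_of_sub y_i.
move=> all_legal; apply: I_wins => i; have [Z_i [y_i T_i]] := all_legal i.
by split; [apply: legal_subspace_sub Z_i | split=> //; apply: tail_of_sub y_i].
Qed.

Lemma odd_play_ok_sub T (W W' : E -> Prop) p x n Z y :
  subset_of W' W -> odd_play_ok A T W p x n Z y -> odd_play_ok A T W' p x n Z y.
Proof.
move=> W'W [I_legal I_wins]; split.
  move=> k legal; apply: I_legal => i lt_ik; have [y_i [T_i Z_i]] := legal i lt_ik.
  by split; [apply: tail_of_sub y_i | split=> //; apply: legal_subspace_sub Z_i].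
move=> all_legal; apply: I_wins => i; have [y_i [T_i Z_i]] := all_legal i.
by split; [apply: tail_of_sub y_i | split=> //; apply: legal_subspace_sub Z_i].
Qed.

Lemma strategy_sub T (W W' : E -> Prop) p :
  subset_of W' W -> I_has_strategy A T W p -> I_has_strategy A T W' p.
Proof.
rewrite /I_has_strategy => W'W; case: ifP => _ [s s_wins]; exists s.
  by move: s_wins; rewrite !wins_oddE => s_wins Z y; apply: odd_play_ok_sub (s_wins Z y).
by move: s_wins; rewrite !wins_evenE => s_wins Z y; apply: even_play_ok_sub (s_wins Z y).
Qed.

Lemma legal_subspace_tail (W : E -> Prop) Z N i :
  legal_subspace W Z i -> legal_subspace (tail_space W N) (fun j => tail_space (Z j) N) i.
Proof.
by move=> [Z_block ZW]; split; [apply: tail_space_block | move=> x [/ZW]].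
Qed.

Lemma tail_of_tail (W : E -> Prop) n N z :
  tail_of W (maxn n N) z -> tail_of (tail_space W N) n z.
Proof.
move=> [z_W [nz_z z_max]]; have [z_n z_N] : beyond n z /\ beyond N z.
  by split=> i /z_max; rewrite gtn_max => /andP [].
by split=> //; split.
Qed.

(* Playing in the game on [W[N]] is simulated in the game on [W] by
   replacing II's subspaces [Z] with [Z[N]] and I's numbers [n] with
   [max n N]. *)
Lemma even_play_ok_tail T (W : E -> Prop) N p x n Z y :
  even_play_ok A T (tail_space W N) p x n (fun i => tail_space (Z i) N) y ->
  even_play_ok A T W p x (fun i => maxn (n i) N) Z y.
Proof.
move=> [I_legal I_wins]; split.
  move=> k Z_legal y_legal.
  have [[] //] := I_legal k (fun i lt_ik => legal_subspace_tail N (Z_legal i lt_ik))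
    (fun i lt_ik => let: conj y_i T_i := y_legal i lt_ik in conj (tail_of_tail y_i) T_i).
move=> all_legal; apply: I_wins => i; have [Z_i [y_i T_i]] := all_legal i.
by split; [apply: legal_subspace_tail | split=> //; apply: tail_of_tail].
Qed.

Lemma odd_play_ok_tail T (W : E -> Prop) N p x n Z y :
  odd_play_ok A T (tail_space W N) p x n (fun i => tail_space (Z i) N) y ->
  odd_play_ok A T W p x (fun i => maxn (n i) N) Z y.
Proof.
move=> [I_legal I_wins]; split.
  move=> k legal; have [[] //] := I_legal k (fun i lt_ik =>
    let: conj y_i (conj T_i Z_i) := legal i lt_ik in
    conj (tail_of_tail y_i) (conj T_i (legal_subspace_tail N Z_i))).
move=> all_legal; apply: I_wins => i; have [y_i [T_i Z_i]] := all_legal i.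
by split; [apply: tail_of_tail | split=> //; apply: legal_subspace_tail].
Qed.

Definition tail_history (N : nat) (h : seq (E * (E -> Prop))) : seq (E * (E -> Prop)) :=
  [seq (yZ.1, tail_space yZ.2 N) | yZ <- h].

Lemma strategy_of_tail T (W : E -> Prop) N p :
  I_has_strategy A T (tail_space W N) p -> I_has_strategy A T W p.
Proof.
rewrite /I_has_strategy; case: ifP => _ [s s_wins].
- exists (maxn s.1 N, fun h => let r := s.2 (tail_history N h) in (r.1, maxn r.2 N)).
  move: s_wins; rewrite !wins_oddE => s_wins Z y.
  have move_tail : forall i, odd_move s (fun i => tail_space (Z i) N) y i =
      s.2 (tail_history N [seq (y j, Z j) | j <- iota 0 i.+1]).
    by move=> i; rewrite /odd_move /tail_history -map_comp.
  have := odd_play_ok_tail (s_wins (fun i => tail_space (Z i) N) y); congr odd_play_ok.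
    by apply: functional_extensionality => i; rewrite move_tail.
  by apply: functional_extensionality => -[|i] //=; rewrite move_tail.
- exists (fun Z0 h => let r := s (tail_space Z0 N) (tail_history N h) in (r.1, maxn r.2 N)).
  move: s_wins; rewrite !wins_evenE => s_wins Z y.
  have move_tail : forall i, even_move s (fun i => tail_space (Z i) N) y i =
      s (tail_space (Z 0%N) N) (tail_history N (even_history Z y i)).
    by move=> i; rewrite /even_move /even_history /tail_history -map_comp.
  have := even_play_ok_tail (s_wins (fun i => tail_space (Z i) N) y).
  by congr even_play_ok; apply: functional_extensionality => i; rewrite move_tail.
Qed.

End Strategies.

Section OneMoveAnalysis.
Variable F : countFieldType.
Local Notation E := {poly F}.
Variable A : (nat -> E) -> Prop.

Lemma I_has_strategy_even T W (p : seq E) : ~~ odd (size p) ->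
  I_has_strategy A T W p <-> exists s, wins_even A T W p s.
Proof. by rewrite /I_has_strategy => /negbTE ->. Qed.

Lemma I_has_strategy_odd T W (p : seq E) : odd (size p) ->
  I_has_strategy A T W p <-> exists s, wins_odd A T W p s.
Proof. by rewrite /I_has_strategy => ->. Qed.

Definition even_winner (T : seq E -> Prop) (W : E -> Prop) (p : seq E) : stratI_even F :=
  epsilon (inhabits (fun _ _ => (0, 0%N))) (wins_even A T W p).

Definition odd_winner (T : seq E -> Prop) (W : E -> Prop) (p : seq E) : stratI_odd F :=
  epsilon (inhabits (0%N, fun _ => (0, 0%N))) (wins_odd A T W p).

Lemma even_winnerP T W (p : seq E) : ~~ odd (size p) ->
  I_has_strategy A T W p -> wins_even A T W p (even_winner T W p).
Proof. by move=> p_even /(I_has_strategy_even _ _ p_even); apply: epsilon_spec. Qed.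

Lemma odd_winnerP T W (p : seq E) : odd (size p) ->
  I_has_strategy A T W p -> wins_odd A T W p (odd_winner T W p).
Proof. by move=> p_odd /(I_has_strategy_odd _ _ p_odd); apply: epsilon_spec. Qed.

Lemma strategy_odd_step T W (p : seq E) : odd (size p) ->
  (exists n, forall z, tail_of W n z -> T (rcons p z) -> I_has_strategy A T W (rcons p z)) ->
  I_has_strategy A T W p.
Proof.
move=> p_odd [n after_z]; apply/(I_has_strategy_odd _ _ p_odd).
pose rho z := even_winner T W (rcons p z).
pose s h := if h is (y0, Z0) :: h' then rho y0 Z0 h' else (0, 0%N).
exists (n, s); apply/wins_oddE => Z y.
case: (classic (tail_of W n (y 0%N) /\ T (rcons p (y 0%N)) /\ legal_subspace W Z 0))
  => [legal0|]; last exact: odd_play_ok_illegal.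
apply/(odd_play_okE _ _ legal0).
have rho_wins : wins_even A T W (rcons p (y 0%N)) (rho (y 0%N)).
  by apply: even_winnerP; [rewrite size_rcons /= p_odd | apply: after_z; case: legal0 => ? [] ].
have moves i : odd_move (n, s) Z y i = even_move (rho (y 0%N)) Z (fun i => y i.+1) i.
  by rewrite /odd_move map_iotaS.
have := (rho_wins : wins_even _ _ _ _ _) Z (fun i => y i.+1).
by congr even_play_ok; apply: functional_extensionality => i; rewrite moves.
Qed.

Lemma strategy_odd_stepV T W (p : seq E) : odd (size p) -> I_has_strategy A T W p ->
  exists n, forall z, tail_of W n z -> T (rcons p z) -> I_has_strategy A T W (rcons p z).
Proof.
move=> p_odd /(I_has_strategy_odd _ _ p_odd) [s s_wins]; exists s.1 => z z_legal T_z.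
apply/I_has_strategy_even; first by rewrite size_rcons /= p_odd.
exists (fun Z0 h => s.2 ((z, Z0) :: h)); apply/wins_evenE => Z y.
case: (classic (legal_subspace W Z 0)) => [Z0_legal|]; last exact: even_play_ok_illegal.
pose y' j := if j is j'.+1 then y j' else z.
have legal0 : tail_of W (odd_bound s Z y' 0) (y' 0%N) /\ T (rcons p (y' 0%N)) /\
  legal_subspace W Z 0 by [].
have := (odd_play_okE _ _ legal0).1 ((s_wins : wins_odd _ _ _ _ _) Z y').
have moves i : odd_move s Z y' i = even_move (fun Z0 h => s.2 ((z, Z0) :: h)) Z y i.
  by rewrite /odd_move map_iotaS.
have -> : (fun i => y' i.+1) = y by apply: functional_extensionality.
by congr even_play_ok; apply: functional_extensionality => i; rewrite -moves.
Qed.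

Lemma strategy_even_step T W (p : seq E) : ~~ odd (size p) ->
  (forall Z, block_subspace Z -> subset_of Z W ->
     exists x, Z x /\ x != 0 /\ T (rcons p x) /\ I_has_strategy A T W (rcons p x)) ->
  I_has_strategy A T W p.
Proof.
move=> p_even answer; apply/(I_has_strategy_even _ _ p_even).
pose good Z x := block_subspace Z -> subset_of Z W ->
  Z x /\ x != 0 /\ T (rcons p x) /\ I_has_strategy A T W (rcons p x).
pose chi Z := epsilon (inhabits 0) (good Z).
have chiP Z : good Z (chi Z).
  apply: epsilon_spec; case: (classic (block_subspace Z /\ subset_of Z W)) => [[Z_block ZW]|bad].
    by have [x x_good] := answer Z Z_block ZW; exists x.
  by exists 0 => Z_block ZW; case: bad.
pose rho x := odd_winner T W (rcons p x).
pose s : stratI_even F := fun Z0 h =>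
  if h is [::] then (chi Z0, (rho (chi Z0)).1) else (rho (chi Z0)).2 h.
exists s; apply/wins_evenE => Z y; apply: even_play_ok_first => -[Z_block ZW].
  by have [? [? []]] := chiP (Z 0%N) Z_block ZW.
have rho_wins : wins_odd A T W (rcons p (chi (Z 0%N))) (rho (chi (Z 0%N))).
  have [_ [_ [_ I_wins]]] := chiP (Z 0%N) Z_block ZW.
  by apply: odd_winnerP => //; rewrite size_rcons /= (negbTE p_even).
have := (rho_wins : wins_odd _ _ _ _ _) (fun i => Z i.+1) y.
have moves i : even_move s Z y i.+1 = odd_move (rho (chi (Z 0%N))) (fun i => Z i.+1) y i by [].
by congr odd_play_ok; apply: functional_extensionality => -[|i] //; rewrite /= moves.
Qed.

End OneMoveAnalysis.

Section LegalPlay.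
Variable F : countFieldType.
Local Notation E := {poly F}.
Variable A : (nat -> E) -> Prop.

Fixpoint legal_position (nx : seq E -> (E -> Prop) -> E) (q : seq E) (Z0 : E -> Prop)
    (h : seq (E * (E -> Prop))) : seq E * (E -> Prop) :=
  if h is (y, Z1) :: h' then legal_position nx (q ++ [:: nx q Z0; y]) Z1 h' else (q, Z0).

Lemma legal_position_rcons nx (q : seq E) Z0 h y Z1 :
  legal_position nx q Z0 (rcons h (y, Z1)) =
  let: (q', Z') := legal_position nx q Z0 h in (q' ++ [:: nx q' Z'; y], Z1).
Proof. by elim: h q Z0 => [|[y' Z'] h IH] q Z0 //=. Qed.

(* If every continuation of the position [p] lands in [A], then I wins from
   [p] just by playing legally, which a rule always allows. *)
Lemma legal_play_wins_even T V v0 (W : E -> Prop) p :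
  is_rule V v0 T -> subset_of W V -> ~~ odd (size p) -> T p ->
  (forall u, A (outcome p u)) -> I_has_strategy A T W p.
Proof.
move=> [_ [_ [_ T_even]]] WV p_even T_p p_wins; apply/(I_has_strategy_even _ _ _ p_even).
pose nx q Z := epsilon (inhabits 0) (fun x => Z x /\ x != 0 /\ T (rcons q x)).
have nxP q Z : T q -> ~~ odd (size q) -> block_subspace Z -> subset_of Z W ->
    Z (nx q Z) /\ nx q Z != 0 /\ T (rcons q (nx q Z)).
  move=> T_q q_even Z_block ZW.
  apply: (epsilon_spec _ (fun x => Z x /\ x != 0 /\ T (rcons q x))).
  have [n T_n] := T_even q T_q q_even; have [x [Z_x [nz_x x_n]]] := block_subspace_beyond n Z_block.
  by exists x; do 2!split=> //; apply: T_n; split; [apply/WV/ZW | split].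
pose s : stratI_even F := fun Z0 h => let: (q, Z') := legal_position nx p Z0 h in (nx q Z', 0%N).
exists s; apply/wins_evenE => Z y; set x := fun i => _.
have reached i : legal_position nx p (Z 0%N) (even_history Z y i) =
    (p ++ mkseq (interleave x y) i.*2, Z i).
  elim: i => [|i IH]; first by rewrite /= cats0.
  rewrite /even_history -addn1 iotaD add0n map_cat cats1 legal_position_rcons IH /= addn1 doubleS.
  by rewrite position_round /x /even_move /s IH.
have x_def i : x i = nx (p ++ mkseq (interleave x y) i.*2) (Z i).
  by rewrite {1}/x /even_move /s reached.
split=> [k Z_legal y_legal|_]; last exact: p_wins.
have T_k : T (p ++ mkseq (interleave x y) k.*2).
  case: k Z_legal y_legal => [|k] _ y_legal; first by rewrite cats0.
  by have [_] := y_legal k (ltnSn k); rewrite doubleS.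
have [Z_k_block Z_kW] := Z_legal k (leqnn k).
rewrite position_half_round x_def.
by apply: nxP => //; rewrite odd_size_position.
Qed.

Lemma legal_play_wins T V v0 (W : E -> Prop) p :
  is_rule V v0 T -> subset_of W V -> T p ->
  (forall u, A (outcome p u)) -> I_has_strategy A T W p.
Proof.
move=> T_rule WV T_p p_wins; have [p_odd|p_even] := boolP (odd (size p)); last first.
  exact: legal_play_wins_even T_rule WV p_even T_p p_wins.
apply: strategy_odd_step => //; exists 0%N => z _ T_z.
apply: legal_play_wins_even T_rule WV _ T_z _; first by rewrite size_rcons /= p_odd.
move=> u; have := p_wins (fun t => if t is t'.+1 then u t' else z).
by rewrite (outcome_split _ _ 1) /= cats1.
Qed.

End LegalPlay.

Section PlaySplicing.
Variable F : countFieldType.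
Local Notation E := {poly F}.
Variable A : (nat -> E) -> Prop.

Lemma find_iota_none (a : pred nat) i : (forall k, (k < i)%N -> ~~ a k) -> find a (iota 0 i) = i.
Proof.
move=> not_a; rewrite -{2}(size_iota 0 i); apply: hasNfind; apply/hasPn => k.
by rewrite mem_iota add0n /=; apply: not_a.
Qed.

Lemma find_iota_first (a : pred nat) i J : (J < i)%N -> a J ->
  (forall k, (k < J)%N -> ~~ a k) -> find a (iota 0 i) = J.
Proof.
move=> lt_Ji a_J not_a; rewrite -(subnKC (ltnW lt_Ji)) iotaD find_cat.
have -> : has a (iota 0 J) = false.
  by apply/negbTE/hasPn => k; rewrite mem_iota add0n /=; apply: not_a.
rewrite size_iota add0n; case def_m: (i - J)%N => [|m]; last by rewrite /= a_J addn0.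
by move: lt_Ji; rewrite -subn_gt0 def_m.
Qed.

Lemma even_play_ok_weaken (S T : seq E -> Prop) W p x n Z y :
  (forall q, S q -> T q) -> (forall i, S (p ++ mkseq (interleave x y) i.*2.+2)) ->
  even_play_ok A S W p x n Z y -> even_play_ok A T W p x n Z y.
Proof.
move=> ST S_pos [I_legal I_wins]; split.
  move=> k Z_legal y_legal.
  have [Z_x [nz_x S_x]] := I_legal k Z_legal (fun i lt_ik => conj (y_legal i lt_ik).1 (S_pos i)).
  by split=> //; split=> //; apply: ST.
by move=> all_legal; apply: I_wins => i; have [Z_i [y_i _]] := all_legal i.
Qed.

Lemma even_play_ok_splice (S T : seq E -> Prop) W p (x x1 : nat -> E) n n1 Z y J :
  (forall q, S q -> T q) ->
  (forall i, (i <= J)%N -> x i = x1 i /\ n i = n1 i) ->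
  (forall i, (i < J)%N -> S (p ++ mkseq (interleave x1 y) i.*2.+2)) ->
  even_play_ok A S W p x1 n1 Z y ->
  (T (p ++ mkseq (interleave x y) J.+1.*2) ->
     even_play_ok A T W (p ++ mkseq (interleave x y) J.+1.*2) (fun m => x (J.+1 + m)%N)
       (fun m => n (J.+1 + m)%N) (fun m => Z (J.+1 + m)%N) (fun m => y (J.+1 + m)%N)) ->
  even_play_ok A T W p x n Z y.
Proof.
move=> ST agree S_pos [I_legal1 _] rest_ok.
pose q := p ++ mkseq (interleave x y) J.+1.*2.
have T_q : (forall i, (i < J.+1)%N ->
    tail_of W (n i) (y i) /\ T (p ++ mkseq (interleave x y) i.*2.+2)) -> T q.
  by move=> y_legal; rewrite /q doubleS; exact: (y_legal J (ltnSn J)).2.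
have shift t : p ++ mkseq (interleave x y) (J.+1.*2 + t) =
    q ++ mkseq (interleave (fun m => x (J.+1 + m)%N) (fun m => y (J.+1 + m)%N)) t.
  exact: position_shift.
split.
- move=> k Z_legal y_legal; have [le_kJ|lt_Jk] := leqP k J.
  + have agree_k : forall i, (i < k.+1)%N -> x i = x1 i /\ y i = y i.
      by move=> i; rewrite ltnS => le_ik; split=> //; exact: (agree i (leq_trans le_ik le_kJ)).1.
    have [Z_x1 [nz_x1 S_x1]] : Z k (x1 k) /\ x1 k != 0 /\ S (p ++ mkseq (interleave x1 y) k.*2.+1).
      apply: I_legal1 => // i lt_ik; have [y_i _] := y_legal i lt_ik; split.
        by rewrite -(agree i (ltnW (leq_trans lt_ik le_kJ))).2.
      exact: S_pos (leq_trans lt_ik le_kJ).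
    rewrite (agree k le_kJ).1 (interleave_agree agree_k); last by rewrite doubleS ltnS leqnSn.
    by split=> //; split=> //; apply: ST.
  + have [rest_legal _] := rest_ok (T_q (fun i lt_iJ => y_legal i (leq_trans lt_iJ lt_Jk))).
    have def_k : k = (J.+1 + (k - J.+1))%N by rewrite subnKC.
    move: (k - J.+1)%N def_k Z_legal y_legal => m -> Z_legal y_legal.
    rewrite doubleD -addnS shift; apply: rest_legal => [i le_im|i lt_im].
      by apply: Z_legal; rewrite leq_add2l.
    have [y_i T_i] : tail_of W (n (J.+1 + i)%N) (y (J.+1 + i)%N) /\
        T (p ++ mkseq (interleave x y) (J.+1 + i).*2.+2) by apply: y_legal; rewrite ltn_add2l.
    by split=> //; move: T_i; rewrite doubleD -!addnS shift.
- move=> all_legal; have [_ rest_wins] := rest_ok (T_q (fun i _ => (all_legal i).2)).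
  rewrite (outcome_shift p x y J.+1); apply: rest_wins => i.
  have [Z_i [y_i T_i]] := all_legal (J.+1 + i)%N.
  by split=> //; split=> //; move: T_i; rewrite doubleD -!addnS shift.
Qed.

End PlaySplicing.

Section SwitchStrategy.
Variable F : countFieldType.
Local Notation E := {poly F}.
Variable A : (nat -> E) -> Prop.

Definition holdsb (S : seq E -> Prop) (q : seq E) : bool :=
  if excluded_middle_informative (S q) then true else false.

Lemma holdsbP (S : seq E -> Prop) q : holdsb S q <-> S q.
Proof. by rewrite /holdsb; case: excluded_middle_informative. Qed.

Lemma size_even_history (Z : nat -> E -> Prop) (y : nat -> E) i : size (even_history Z y i) = i.
Proof. by rewrite size_map size_iota. Qed.

Lemma take_even_history (Z : nat -> E -> Prop) (y : nat -> E) i k :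
  (k <= i)%N -> take k (even_history Z y i) = even_history Z y k.
Proof. by move=> le_ki; rewrite -map_take take_iota (minn_idPl le_ki). Qed.

Lemma nth_even_history (Z : nat -> E -> Prop) (y : nat -> E) i k d :
  (k < i)%N -> nth d (even_history Z y i) k = (y k, Z k.+1).
Proof. by move=> lt_ki; rewrite (nth_map 0%N) ?size_iota // nth_iota. Qed.

Lemma drop_even_history (Z : nat -> E -> Prop) (y : nat -> E) i k :
  drop k (even_history Z y i) = even_history (fun m => Z (k + m)%N) (fun m => y (k + m)%N) (i - k).
Proof.
rewrite -map_drop drop_iota add0n -{1}[k]addn0 iotaDl -map_comp.
by apply: eq_map => m /=; rewrite addnS.
Qed.

(* I follows [s] until the first round whose resulting position [q] leaves
   [S]; from then on he follows [rho q]. *)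
Definition switch_strategy (S : seq E -> Prop) (s : stratI_even F)
    (rho : seq E -> stratI_even F) (p : seq E) : stratI_even F := fun Z0 h =>
  let xs k := (s Z0 (take k h)).1 in
  let ys k := (nth (0, Z0) h k).1 in
  let pos k := p ++ mkseq (interleave xs ys) k.*2 in
  let j := find (fun k => ~~ holdsb S (pos k.+1)) (iota 0 (size h)) in
  if (j < size h)%N then rho (pos j.+1) (nth (0, Z0) h j).2 (drop j.+1 h) else s Z0 h.

Variables (S T : seq E -> Prop) (W : E -> Prop) (p : seq E).
Variables (s : stratI_even F) (rho : seq E -> stratI_even F).
Variables (Z : nat -> E -> Prop) (y : nat -> E).

Let xs (k : nat) : E := (even_move s Z y k).1.
Let pos (k : nat) : seq E := p ++ mkseq (interleave xs y) k.*2.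
Let exits (k : nat) : bool := ~~ holdsb S (pos k.+1).

Lemma switch_strategy_move i :
  even_move (switch_strategy S s rho p) Z y i =
  if (find exits (iota 0 i) < i)%N then
    let j := find exits (iota 0 i) in
    even_move (rho (pos j.+1)) (fun m => Z (j.+1 + m)%N) (fun m => y (j.+1 + m)%N) (i - j.+1)
  else even_move s Z y i.
Proof.
rewrite /even_move /switch_strategy size_even_history.
have pos_agree k : (k <= i)%N -> p ++ mkseq (interleave
      (fun k0 => (s (Z 0%N) (take k0 (even_history Z y i))).1)
      (fun k0 => (nth (0, Z 0%N) (even_history Z y i) k0).1)) k.*2 = pos k.
  move=> le_ki; congr (_ ++ _); apply: (interleave_agree (K := k)) => // m lt_mk.
  rewrite take_even_history ?nth_even_history //; last exact: ltnW (leq_trans lt_mk le_ki).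
  exact: leq_trans lt_mk le_ki.
rewrite (@eq_in_find _ _ exits) => [|k]; last first.
  by rewrite mem_iota add0n /= => lt_ki; rewrite /exits pos_agree.
case: ifP => // lt_ji.
by rewrite pos_agree // nth_even_history // drop_even_history /= addn0.
Qed.

Hypothesis ST : forall q, S q -> T q.
Hypothesis s_wins : wins_even A S W p s.

Lemma switch_ok_never_exit : (forall k, ~~ exits k) ->
  even_play_ok A T W p (fun i => (even_move (switch_strategy S s rho p) Z y i).1)
    (fun i => (even_move (switch_strategy S s rho p) Z y i).2) Z y.
Proof.
move=> no_exit; have same_moves i : even_move (switch_strategy S s rho p) Z y i = even_move s Z y i.
  by rewrite switch_strategy_move find_iota_none ?ltnn // => k _; apply: no_exit.
have -> : (fun i => (even_move (switch_strategy S s rho p) Z y i).1) = xs.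
  by apply: functional_extensionality => i; rewrite same_moves.
have -> : (fun i => (even_move (switch_strategy S s rho p) Z y i).2) =
    (fun i => (even_move s Z y i).2) by apply: functional_extensionality => i; rewrite same_moves.
apply: (even_play_ok_weaken ST) ((s_wins : wins_even _ _ _ _ _) Z y) => i.
by rewrite -doubleS; apply/holdsbP; move: (no_exit i); rewrite negbK.
Qed.

Hypothesis p_even : ~~ odd (size p).
Hypothesis rho_wins : forall q, ~~ odd (size q) -> T q -> ~ S q -> wins_even A T W q (rho q).

Lemma switch_ok_first_exit J : exits J -> (forall k, (k < J)%N -> ~~ exits k) ->
  even_play_ok A T W p (fun i => (even_move (switch_strategy S s rho p) Z y i).1)
    (fun i => (even_move (switch_strategy S s rho p) Z y i).2) Z y.
Proof.
move=> exit_J before_J.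
have early i : (i <= J)%N -> even_move (switch_strategy S s rho p) Z y i = even_move s Z y i.
  move=> le_iJ; rewrite switch_strategy_move find_iota_none ?ltnn // => k lt_ki.
  exact: before_J (leq_trans lt_ki le_iJ).
have late m : even_move (switch_strategy S s rho p) Z y (J.+1 + m) =
    even_move (rho (pos J.+1)) (fun m => Z (J.+1 + m)%N) (fun m => y (J.+1 + m)%N) m.
  have lt_J : (J < J.+1 + m)%N by rewrite addSn ltnS leq_addr.
  by rewrite switch_strategy_move (find_iota_first lt_J exit_J before_J) lt_J /= addKn.
have splice := even_play_ok_splice (x1 := xs) (n1 := fun i => (even_move s Z y i).2) (J := J)
  ST _ _ ((s_wins : wins_even _ _ _ _ _) Z y).
apply: splice => [i le_iJ|i lt_iJ|].
- by rewrite early.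
- by rewrite -doubleS; apply/holdsbP; move: (before_J i lt_iJ); rewrite negbK.
have -> : p ++ mkseq (interleave (fun i => (even_move (switch_strategy S s rho p) Z y i).1) y)
    J.+1.*2 = pos J.+1.
  by congr (_ ++ _); apply: (interleave_agree (K := J.+1)) => // i lt_iJ; rewrite early.
move=> T_pos; have pos_even : ~~ odd (size (pos J.+1)) by rewrite odd_size_position.
have not_S : ~ S (pos J.+1) by move/holdsbP; apply/negP.
have := (rho_wins pos_even T_pos not_S : wins_even _ _ _ _ _)
  (fun m => Z (J.+1 + m)%N) (fun m => y (J.+1 + m)%N).
by congr even_play_ok; apply: functional_extensionality => m; rewrite late.
Qed.

End SwitchStrategy.

Section SwitchingRules.
Variable F : countFieldType.
Local Notation E := {poly F}.
Variable A : (nat -> E) -> Prop.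

(* A winning strategy for I in the game with a smaller rule [S ⊆ T] gives
   one for the rule [T], provided I wins from every even position allowed by
   [T] but not by [S]: I switches strategies when the play leaves [S]. *)
Lemma switch_rules_even (S T : seq E -> Prop) W p :
  (forall q, S q -> T q) -> ~~ odd (size p) ->
  (forall q, ~~ odd (size q) -> T q -> ~ S q -> I_has_strategy A T W q) ->
  I_has_strategy A S W p -> I_has_strategy A T W p.
Proof.
move=> ST p_even exit_wins /(I_has_strategy_even _ _ _ p_even) [s s_wins].
apply/(I_has_strategy_even _ _ _ p_even).
have rho_wins q : ~~ odd (size q) -> T q -> ~ S q -> wins_even A T W q (even_winner A T W q).
  by move=> q_even T_q not_S; apply: even_winnerP => //; apply: exit_wins.
exists (switch_strategy S s (even_winner A T W) p); apply/wins_evenE => Z y.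
pose exits k := ~~ holdsb S (p ++ mkseq (interleave (fun k => (even_move s Z y k).1) y) k.+1.*2).
case: (classic (exists k, exits k)) => [ex_exit|no_exit].
- case: (ex_minnP ex_exit) => J exit_J J_min.
  apply: (switch_ok_first_exit ST s_wins p_even rho_wins exit_J) => k lt_kJ.
  by apply/negP => /J_min; rewrite leqNgt lt_kJ.
- apply: (switch_ok_never_exit _ ST s_wins) => k.
  by apply/negP => exit_k; apply: no_exit; exists k.
Qed.

Lemma switch_rules (S T : seq E -> Prop) W p :
  (forall q, S q -> T q) ->
  (forall q, ~~ odd (size q) -> T q -> ~ S q -> I_has_strategy A T W q) ->
  I_has_strategy A S W p -> I_has_strategy A T W p.
Proof.
move=> ST exit_wins S_wins; have [p_odd|p_even] := boolP (odd (size p)); last first.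
  exact: switch_rules_even S_wins.
have [n after_z] := strategy_odd_stepV p_odd S_wins.
apply: strategy_odd_step => //; exists n => z z_legal T_z.
have z_even : ~~ odd (size (rcons p z)) by rewrite size_rcons /= p_odd.
case: (classic (S (rcons p z))) => [S_z|not_S]; last exact: exit_wins.
exact: switch_rules_even z_even exit_wins (after_z z z_legal S_z).
Qed.

End SwitchingRules.

Section Stabilization.
Variable F : countFieldType.
Local Notation E := {poly F}.
Variable A : (nat -> E) -> Prop.
Variable T : seq E -> Prop.

Definition decides_games (X : E -> Prop) : Prop :=
  forall q W, block_subspace W -> subset_of W X ->
    (I_has_strategy A T W q <-> I_has_strategy A T X q).

(* If either I wins from [q] in the game on [Y] or he wins in no game on a
   block subspace of [Y], then games from [q] are decided below any [X ⊆* Y]: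
   the game on [W ⊆ X] is, via [W[N] ⊆ Y], equivalent to one below [Y]. *)
Lemma decided_below (X Y : E -> Prop) q : block_subspace X -> almost_subset X Y ->
  I_has_strategy A T Y q \/
    (forall W, block_subspace W -> subset_of W Y -> ~ I_has_strategy A T W q) ->
  forall W, block_subspace W -> subset_of W X ->
    (I_has_strategy A T W q <-> I_has_strategy A T X q).
Proof.
move=> X_block [N XY] decided.
have tail_sub W : subset_of W X -> subset_of (tail_space W N) Y.
  by move=> WX x [/WX x_X x_N]; apply: XY.
case: decided => [Y_wins|Y_loses] W W_block WX.
  have wins W' : subset_of W' X -> I_has_strategy A T W' q.
    by move=> W'X; apply: (strategy_of_tail (N := N)); exact: strategy_sub (tail_sub _ W'X) Y_wins.
  by split=> _; apply: wins.
have loses W' : block_subspace W' -> subset_of W' X -> ~ I_has_strategy A T W' q.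
  move=> W'_block W'X W'_wins; apply: (Y_loses _ (tail_space_block N W'_block) (tail_sub _ W'X)).
  exact: strategy_sub (@tail_space_sub _ W' N) W'_wins.
by split=> [/(loses _ W_block WX)|/(loses _ X_block (fun x => id))].
Qed.

Lemma stabilize_games (V : E -> Prop) : block_subspace V ->
  exists X0, block_subspace X0 /\ subset_of X0 V /\ decides_games X0.
Proof.
move=> V_block.
pose decided q Y := I_has_strategy A T Y q \/
  (forall W, block_subspace W -> subset_of W Y -> ~ I_has_strategy A T W q).
have [X0 [X0_block [X0V X0_decided]]] : exists X0, block_subspace X0 /\ subset_of X0 V /\
    forall q : seq E, exists Y, decided q Y /\ almost_subset X0 Y.
  apply: diagonalize => // q Y Y_block YV.
  case: (classic (exists W, block_subspace W /\ subset_of W Y /\ I_has_strategy A T W q)).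
    by move=> [W [W_block [WY W_wins]]]; exists W; do 2!split=> //; left.
  move=> no_W; exists Y; do 2!split=> //; right=> W W_block WY W_wins.
  by apply: no_W; exists W.
exists X0; split=> //; split=> // q W W_block WX0; have [Y [Y_decided X0Y]] := X0_decided q.
exact: decided_below X0_block X0Y Y_decided W W_block WX0.
Qed.

Lemma stabilize_moves (X0 : E -> Prop) : block_subspace X0 -> decides_games X0 ->
  exists X, block_subspace X /\ subset_of X X0 /\
    forall q, T q -> ~~ odd (size q) -> ~ I_has_strategy A T X0 q ->
    exists N, forall x, X x -> beyond N x -> x != 0 -> T (rcons q x) ->
      ~ I_has_strategy A T X0 (rcons q x).
Proof.
move=> X0_block X0_decides.
pose no_good_move q Y := T q -> ~~ odd (size q) -> ~ I_has_strategy A T X0 q ->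
  forall x, Y x -> x != 0 -> T (rcons q x) -> ~ I_has_strategy A T X0 (rcons q x).
have [X [X_block [XX0 X_moves]]] : exists X, block_subspace X /\ subset_of X X0 /\
    forall q : seq E, exists Y, no_good_move q Y /\ almost_subset X Y.
  apply: diagonalize => // q Y Y_block YX0.
  case: (classic (T q /\ ~~ odd (size q) /\ ~ I_has_strategy A T X0 q));
    last by move=> not_lost; exists Y; do 2!split=> //; move=> T_q q_even q_lost; case: not_lost.
  move=> [T_q [q_even q_lost]].
  have Y_lost : ~ I_has_strategy A T Y q by rewrite (X0_decides q Y Y_block YX0).
  case: (classic (exists Z, block_subspace Z /\ subset_of Z Y /\ forall x, Z x -> x != 0 ->
      T (rcons q x) -> ~ I_has_strategy A T Y (rcons q x))).
    move=> [Z [Z_block [ZY Z_moves]]]; exists Z; do 2!split=> //; move=> _ _ _ x Z_x nz_x T_x.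
    by rewrite -(X0_decides _ Y Y_block YX0); apply: Z_moves.
  move=> no_Z; case: Y_lost; apply: strategy_even_step => // Z Z_block ZY.
  apply: NNPP => no_x; apply: no_Z; exists Z; do 2!split=> //; move=> x Z_x nz_x T_x x_wins.
  by apply: no_x; exists x.
exists X; split=> //; split=> // q T_q q_even q_lost.
have [Y [Y_moves [N XY]]] := X_moves q; exists N => x X_x x_N.
exact: Y_moves T_q q_even q_lost x (XY x X_x x_N).
Qed.

End Stabilization.

Section LosingPositions.
Variable F : countFieldType.
Local Notation E := {poly F}.
Variable A : (nat -> E) -> Prop.
Variables (V X0 X : E -> Prop) (v : seq E) (T : seq E -> Prop).

Definition losing_positions (q : seq E) : Prop := T q /\ ~ I_has_strategy A T X0 q.

Hypothesis T_rule : is_rule V v T.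
Hypothesis X0V : subset_of X0 V.

(* A position of [S] can never have all its continuations in [A]: I would win
   by legal play.  Hence branches of [S] avoid the interior of [A]. *)
Lemma losing_positions_avoid_interior x :
  body losing_positions x -> ~ interior A x.
Proof.
move=> x_branch [m x_int]; have [m' [le_mm' [T_pos pos_lost]]] := x_branch m.
apply: pos_lost; apply: (legal_play_wins T_rule X0V T_pos) => u; apply: x_int => i lt_im.
have lt_im' : (i < m'.+1)%N by rewrite ltnS (leq_trans (ltnW lt_im) le_mm').
by rewrite /outcome size_mkseq lt_im' nth_mkseq.
Qed.

Hypothesis X0_decides : decides_games A T X0.
Hypothesis XX0 : subset_of X X0.
Hypothesis X_moves : forall q, T q -> ~~ odd (size q) -> ~ I_has_strategy A T X0 q ->
  exists N, forall x, X x -> beyond N x -> x != 0 -> T (rcons q x) ->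
    ~ I_has_strategy A T X0 (rcons q x).
Hypothesis v_lost : ~ I_has_strategy A T X0 v.

Lemma losing_positions_rule : is_rule X v losing_positions.
Proof.
have [_ [T_fin [_ T_even]]] := T_rule.
split; first by split=> //; case: T_rule.
split; first by move=> q [/T_fin].
split=> [q [T_q q_lost] q_odd Z Z_block ZX | q [T_q q_lost] q_even].
- have ZX0 : subset_of Z X0 by move=> x /ZX /XX0.
  have Z_lost : ~ I_has_strategy A T Z q by rewrite (@X0_decides q Z Z_block ZX0).
  apply: NNPP => no_z; apply: Z_lost; apply: strategy_odd_step => //; exists 0%N => z z_legal T_z.
  apply: NNPP => z_lost; apply: no_z; exists z; split; first by case: z_legal.
  by split=> //; rewrite -(@X0_decides _ Z Z_block ZX0).
- have [nT T_nT] := T_even q T_q q_even.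
  have [N X_N] := X_moves T_q q_even q_lost.
  exists (maxn nT N) => z [X_z [nz_z z_max]].
  have [z_nT z_N] : beyond nT z /\ beyond N z.
    by split=> i /z_max; rewrite gtn_max => /andP [].
  have T_z : T (rcons q z) by apply: T_nT; split; [apply/X0V/XX0 | split].
  by split=> //; apply: X_N.
Qed.

Hypothesis no_strategy : forall W, block_subspace W -> subset_of W V ->
  ~ I_has_strategy A T W v.

(* I has no strategy in the games with the losing positions as rule either:
   otherwise he could switch to a [T]-strategy as soon as a position becomes
   winning, and so win a [T]-game from [v]. *)
Lemma losing_positions_no_strategy W : block_subspace W -> subset_of W X ->
  ~ I_has_strategy A losing_positions W v.
Proof.
move=> W_block WX S_wins; have WX0 : subset_of W X0 by move=> x /WX /XX0.
apply: (no_strategy W_block (fun x => fun W_x => X0V (WX0 x W_x))).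
apply: (switch_rules (S := losing_positions)) S_wins => [q []//|q _ T_q not_lost].
rewrite (@X0_decides q W W_block WX0); apply: NNPP => q_lost; exact: not_lost.
Qed.

End LosingPositions.

Theorem mainTheorem7 (F : countFieldType)
    (A : (nat -> {poly F}) -> Prop) (V : {poly F} -> Prop)
    (v : seq {poly F}) (T : seq {poly F} -> Prop) :
  block_subspace V -> block_fin v -> is_rule V v T ->
  (forall W, block_subspace W -> subset_of W V -> ~ I_has_strategy A T W v) ->
  exists (X : {poly F} -> Prop) (S : seq {poly F} -> Prop),
    block_subspace X /\ subset_of X V /\ is_rule X v S /\
    (forall y, S y -> T y) /\
    (forall x, body S x -> ~ interior A x) /\
    (forall W, block_subspace W -> subset_of W X -> ~ I_has_strategy A S W v).
Proof.
move=> V_block _ T_rule no_strategy.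
have [X0 [X0_block [X0V X0_decides]]] := stabilize_games A T V_block.
have [X [X_block [XX0 X_moves]]] := stabilize_moves X0_block X0_decides.
have v_lost : ~ I_has_strategy A T X0 v by apply: no_strategy.
exists X, (losing_positions A X0 T); split=> //; split; first by move=> x /XX0 /X0V.
split; first exact: losing_positions_rule T_rule X0V X0_decides XX0 X_moves v_lost.
split; first by move=> q [].
split; first by move=> x; exact: (losing_positions_avoid_interior T_rule X0V).
by move=> W; exact: (losing_positions_no_strategy X0V X0_decides XX0 no_strategy).
Qed.
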